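(* Let $\mathsf{M}^s=\{\langle v,\mathfrak{R}\rangle:\mathfrak{R}\text{ is symmetric}\}$ and $\mathsf{M}^n=\{\langle v,\mathfrak{R}\rangle:\text{for all }\varphi,\psi,\ \langle\neg\varphi,\psi\rangle\in\mathfrak{R}\Rightarrow\langle\varphi,\psi\rangle\in\mathfrak{R}\}$ (with $v$ ranging over all valuations). Neither $\mathsf{M}^s$ nor $\mathsf{M}^n$ is definable.
   Context: Language: propositional letters $\Phi=\{p_0,p_1,\dots\}$; connectives $\neg$, $\lor,\wedge,\to,\leftrightarrow,\vartriangle,\looparrowright$; $\mathsf{FOR}$ the set of all formulas. An Epstein model is $\langle v,\mathfrak{R}\rangle$ with $v:\Phi\to\{0,1\}$ and $\mathfrak{R}\subseteq\mathsf{FOR}^2$; truth: letters via $v$, boolean connectives classical, $\langle v,\mathfrak{R}\rangle\vDash\varphi\vartriangle\psi$ iff both true and $\langle\varphi,\psi\rangle\in\mathfrak{R}$; $\langle v,\mathfrak{R}\rangle\vDash\varphi\looparrowright\psi$ iff $\varphi\to\psi$ true and $\langle\varphi,\psi\rangle\in\mathfrak{R}$. A set $\mathsf{K}$ of Epstein models is definable iff there is $\Gamma\subseteq\mathsf{FOR}$ such that for every Epstein model $\mathfrak{M}$: $\mathfrak{M}\vDash\gamma$ for all $\gamma\in\Gamma$ iff $\mathfrak{M}\in\mathsf{K}$. *)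

Inductive form : Type :=
| Var : nat -> form
| Neg : form -> form
| Or : form -> form -> form
| And : form -> form -> form
| Imp : form -> form -> form
| Iff : form -> form -> form
| Tri : form -> form -> form
| Loop : form -> form -> form.

Record emodel : Type := EModel {
  val : nat -> bool;
  rel : form -> form -> Prop
}.

Fixpoint sat (M : emodel) (f : form) : Prop :=
  match f with
  | Var n => val M n = true
  | Neg a => ~ sat M a
  | Or a b => sat M a \/ sat M b
  | And a b => sat M a /\ sat M b
  | Imp a b => sat M a -> sat M b
  | Iff a b => (sat M a <-> sat M b)
  | Tri a b => (sat M a /\ sat M b) /\ rel M a b
  | Loop a b => (sat M a -> sat M b) /\ rel M a b
  end.

Definition definable (K : emodel -> Prop) : Prop :=
  exists Gamma : form -> Prop,
    forall M : emodel, (forall g, Gamma g -> sat M g) <-> K M.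

Definition Ms (M : emodel) : Prop :=
  forall a b, rel M a b -> rel M b a.

Definition Mn (M : emodel) : Prop :=
  forall a b, rel M (Neg a) b -> rel M a b.

(* Truth of [φ △ ψ] and [φ ↬ ψ] consults the pair [<φ, ψ>] only when [φ → ψ]
   is true, so adding to the relation pairs whose first component is true and
   whose second is false changes the truth of no formula. Starting from the
   model with the everywhere-false valuation and the empty relation, which lies
   in both classes, this adds [<¬p0, p0>] but neither [<p0, ¬p0>] nor
   [<p0, p0>], leaving both classes; a definable class cannot tell the two
   models apart. *)

Lemma sat_rel_invariant (M N : emodel) :
  (forall n, val M n = val N n) ->
  (forall a b, (sat M a -> sat M b) -> (rel M a b <-> rel N a b)) ->
  forall f, sat M f <-> sat N f.
Proof.
  intros Hval Hrel.
  induction f as [n | | | | | | a IHa b IHb | a IHa b IHb]; simpl; try tauto.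
  - rewrite Hval; tauto.
  - assert (HR : sat M a -> sat M b -> (rel M a b <-> rel N a b))
      by (intros; apply Hrel; tauto).
    tauto.
  - assert (HR := Hrel a b); tauto.
Qed.

Definition add_inert_pairs (M : emodel) : emodel :=
  EModel (val M) (fun a b => rel M a b \/ (sat M a /\ ~ sat M b)).

Lemma sat_add_inert_pairs (M : emodel) (f : form) :
  sat (add_inert_pairs M) f <-> sat M f.
Proof.
  apply iff_sym, sat_rel_invariant; simpl; [reflexivity | tauto].
Qed.

Lemma definable_sat_invariant (K : emodel -> Prop) (M N : emodel) :
  definable K -> (forall f, sat M f <-> sat N f) -> K M -> K N.
Proof.
  intros [Gamma HGamma] HMN HKM.
  apply HGamma; intros g Hg.
  apply HMN, (proj2 (HGamma M) HKM), Hg.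
Qed.

Lemma definable_add_inert_pairs (K : emodel -> Prop) (M : emodel) :
  definable K -> K M -> K (add_inert_pairs M).
Proof.
  intros HK; apply definable_sat_invariant; [exact HK |].
  intro f; apply iff_sym, sat_add_inert_pairs.
Qed.

Definition empty_model : emodel := EModel (fun _ => false) (fun _ _ => False).

Lemma Ms_empty_model : Ms empty_model.
Proof. intros a b []. Qed.

Lemma Mn_empty_model : Mn empty_model.
Proof. intros a b []. Qed.

Theorem mainTheorem12 : ~ definable Ms /\ ~ definable Mn.
Proof.
  assert (Hp0 : ~ sat empty_model (Var 0)) by (simpl; discriminate).
  split; intro HK.
  - assert (Hsym := definable_add_inert_pairs _ _ HK Ms_empty_model
                      (Neg (Var 0)) (Var 0)).
    simpl in *; tauto.
  - assert (Hneg := definable_add_inert_pairs _ _ HK Mn_empty_model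
                      (Var 0) (Var 0)).
    simpl in *; tauto.
Qed.
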